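(* For every $d\in\mathbb{Z}^+$ there exists a deterministic 1-aware population protocol computing the predicate $R\colon\mathbb{Z}^+\to\{0,1\}$, $R(n)=\mathbb{I}\{n\ge d\}$ (i.e. $R(n)=1$ if $n\ge d$ and $R(n)=0$ otherwise), whose number of states is at most $\log_2 d + \min\{e,z\} + O(1)$, where $e$ is the number of $1$'s in the binary representation of $d$, $z$ is the number of $0$'s in the binary representation of $d-1$, and the $O(1)$ term is an absolute constant independent of $d$.
   Context: A population protocol is a tuple $\Pi=\langle Q,Q_0,Q_1,q_{init},\delta\rangle$ where $Q$ is a finite set of states, $Q=Q_0\sqcup Q_1$ (disjoint union), $q_{init}\in Q$ is the initial state, and $\delta\colon Q^2\to 2^{Q^2}\setminus\{\varnothing\}$ is the transition function. $\Pi$ is deterministic if $|\delta(q_1,q_2)|=1$ for all $q_1,q_2\in Q$. For $n\in\mathbb{Z}^+$, an $n$-size configuration is a function $C\colon[n]\to Q$, where $[n]=\{1,\dots,n\}$; the initial configuration $I_n$ maps every element to $q_{init}$. A pair $(C_1,C_2)$ of $n$-size configurations is a transition if there are distinct $i,j\in[n]$ with $(C_2(i),C_2(j))\in\delta(C_1(i),C_1(j))$ and $C_2(k)=C_1(k)$ for all $k\ne i,j$ (the pair $(i,j)$ is ordered). $D$ is reachable from $C$ if there is a finite sequence $C=C_1,\dots,C_k=D$ ($k\ge1$) of configurations with each $(C_i,C_{i+1})$ a transition. An execution is an infinite sequence $(C_i)_{i\ge1}$ with $C_1=I_n$ for some $n$ and each $(C_i,C_{i+1})$ a transition; it is fair if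 whenever a configuration $C$ occurs infinitely often in it and $D$ is reachable from $C$, then $D$ also occurs infinitely often. $\Pi$ is a 1-aware population protocol computing $R\colon\mathbb{Z}^+\to\{0,1\}$ if for every $n\in\mathbb{Z}^+$: if $R(n)=0$ then every configuration $C$ reachable from $I_n$ satisfies $C([n])\subseteq Q_0$; and if $R(n)=1$ then for every fair execution $(C_i)_{i\ge1}$ with $C_1=I_n$ there is $i_0$ such that $C_i([n])\subseteq Q_1$ for all $i\ge i_0$. The number of states of $\Pi$ is $|Q|$. *)

From mathcomp Require Import all_boot.
Set Implicit Arguments. Unset Strict Implicit. Unset Printing Implicit Defensive.

(* Population protocols. Q = st P (a finite type); the partition Q = Q0 ⊔ Q1
   is encoded by the output map [out]: Q1 = {q | out q}, Q0 = {q | ~~ out q}. *)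
Record protocol := Protocol {
  st : finType;
  out : st -> bool;
  q_init : st;
  delta : st -> st -> {set st * st};
  delta_nonempty : forall q1 q2, delta q1 q2 != set0
}.

Definition deterministic (P : protocol) : Prop :=
  forall q1 q2 : st P, #|delta q1 q2| = 1.

Definition config (P : protocol) (n : nat) := {ffun 'I_n -> st P}.

Definition init_config (P : protocol) (n : nat) : config P n :=
  [ffun _ => q_init P].

Definition transition (P : protocol) (n : nat) (C1 C2 : config P n) : Prop :=
  exists i j : 'I_n, [/\ i != j,
    (C2 i, C2 j) \in delta (C1 i) (C1 j) &
    forall k, k != i -> k != j -> C2 k = C1 k].

Inductive reachable (P : protocol) (n : nat) : config P n -> config P n -> Prop :=
| reach_refl C : reachable C C
| reach_step C1 C2 C3 : transition C1 C2 -> reachable C2 C3 -> reachable C1 C3.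

Definition execution (P : protocol) (n : nat) (E : nat -> config P n) : Prop :=
  E 0 = init_config P n /\ forall i, transition (E i) (E i.+1).

Definition occurs_inf_often (P : protocol) (n : nat) (E : nat -> config P n)
  (C : config P n) : Prop := forall N, exists i, N <= i /\ E i = C.

Definition fair (P : protocol) (n : nat) (E : nat -> config P n) : Prop :=
  forall C D, occurs_inf_often E C -> reachable C D -> occurs_inf_often E D.

Definition all_out (P : protocol) (n : nat) (b : bool) (C : config P n) : Prop :=
  forall k : 'I_n, out (C k) = b.

Definition computes_1aware (P : protocol) (R : nat -> bool) : Prop :=
  forall n, 0 < n ->
    (R n = false -> forall C, reachable (init_config P n) C -> all_out false C) /\
    (R n = true -> forall E : nat -> config P n, execution E -> fair E ->
        exists i0, forall i, i0 <= i -> all_out true (E i)).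

(* Binary representation of n (no leading zeros; 0 is written "0"),
   least significant digit first. *)
Definition bin_digits (n : nat) : seq nat :=
  [seq (n %/ 2 ^ i) %% 2 | i <- iota 0 (trunc_log 2 n).+1].

Definition ones_bin (n : nat) : nat := count (pred1 1) (bin_digits n).
Definition zeros_bin (n : nat) : nat := count (pred1 0) (bin_digits n).

Definition threshold (d : nat) : nat -> bool := fun n => d <= n.

(* Agents start as tokens of value 1. Two tokens of equal value 2^j merge into a token of
   value 2^(j+1) and an empty agent, and two tokens of value 2^(K-1) merge into a leader of
   value 2^K, where 2^K <= d < 2^(K+1). The leader then moves its value towards d one bit at a
   time: if d = 2^K + P it absorbs tokens for the 1-bits of P, and if d = 2^(K+1) - P it emits
   them (these are the 0-bits of d - 1). It needs one state per bit, hence the min(e, z).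
   Interactions preserve the total value n, and the absorbing output state is created only by
   a pair holding value >= d, or by two leaders; a second leader is made from two tokens worth
   2^K beside a leader worth at least d - 2^K, so for n < d the output state never appears.
   For n >= d, a lexicographic potential (stage of the leader, number of tokens) shows that the
   output state remains reachable from every reachable configuration; it then spreads to all
   agents, and fairness turns reachability into convergence. *)

From mathcomp Require Import all_boot zify.
From Stdlib Require Import Classical.
Set Implicit Arguments. Unset Strict Implicit. Unset Printing Implicit Defensive.

Definition ones_below (m x : nat) : nat := count (fun i => odd (x %/ 2 ^ i)) (iota 0 m).

Lemma ones_binE x : ones_bin x = ones_below (trunc_log 2 x).+1 x.
Proof.
by rewrite /ones_bin /bin_digits count_map; apply: eq_count => i /=; rewrite modn2; case: odd.
Qed.

Lemma ones_below_wide m m' x : x < 2 ^ m -> m <= m' -> ones_below m' x = ones_below m x.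
Proof.
move=> x_lt le_mm'; rewrite /ones_below -(subnKC le_mm') iotaD count_cat add0n.
rewrite [X in _ + X](@eq_in_count _ _ pred0) ?count_pred0 ?addn0 // => i.
rewrite mem_iota => /andP [le_mi _]; rewrite divn_small //.
by rewrite (leq_trans x_lt) // leq_exp2l.
Qed.

Lemma ones_bin_below m x : x < 2 ^ m -> ones_bin x = ones_below m x.
Proof.
move=> x_lt; rewrite ones_binE; case: (leqP m (trunc_log 2 x).+1) => le_m.
  exact: ones_below_wide.
by rewrite (ones_below_wide (@trunc_log_ltn 2 x isT) (ltnW le_m)).
Qed.

Lemma ones_below_add_top m x : x < 2 ^ m -> ones_below m.+1 (2 ^ m + x) = (ones_below m x).+1.
Proof.
move=> x_lt; rewrite /ones_below -[m.+1]addn1 iotaD count_cat /= add0n.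
rewrite -{2}[2 ^ m]mul1n divnMDl ?expn_gt0 // divn_small // addn0 addn1; congr _.+1.
apply: eq_in_count => i; rewrite mem_iota add0n => /andP [_ lt_im].
by rewrite -(subnK (ltnW lt_im)) expnD divnMDl ?expn_gt0 // oddD oddX subn_eq0 leqNgt lt_im.
Qed.

Lemma ones_bin0 : ones_bin 0 = 0.
Proof. by rewrite /ones_bin /bin_digits trunc_log0. Qed.

Definition drop_top (x : nat) : nat := x - 2 ^ trunc_log 2 x.

Lemma ones_bin_drop_top x : 0 < x -> ones_bin x = (ones_bin (drop_top x)).+1.
Proof.
move=> x_gt0; rewrite /drop_top; set k := trunc_log 2 x.
have le_kx : 2 ^ k <= x := @trunc_logP 2 x isT x_gt0.
have x_lt : x < 2 ^ k.+1 := @trunc_log_ltn 2 x isT.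
have y_lt : x - 2 ^ k < 2 ^ k by rewrite expnS in x_lt; lia.
by rewrite (ones_bin_below x_lt) -{1}(subnKC le_kx) ones_below_add_top // -ones_bin_below.
Qed.

Lemma drop_top_add x : 0 < x -> drop_top x + 2 ^ trunc_log 2 x = x.
Proof. by move=> x_gt0; rewrite subnK // (@trunc_logP 2 x isT x_gt0). Qed.

Lemma ones_bin_iter_drop_top x i : i <= ones_bin x -> ones_bin (iter i drop_top x) = ones_bin x - i.
Proof.
elim: i => [|i IH] le_i; first by rewrite subn0.
have := IH (ltnW le_i); rewrite iterS.
case: (posnP (iter i drop_top x)) => [->|pos]; first by rewrite ones_bin0; lia.
by rewrite (ones_bin_drop_top pos); lia.
Qed.

Lemma iter_drop_top_gt0 x i : i < ones_bin x -> 0 < iter i drop_top x.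
Proof.
move=> lt_i; have := ones_bin_iter_drop_top (ltnW lt_i).
by case: posnP => // ->; rewrite ones_bin0; lia.
Qed.

Lemma iter_drop_top_ones_bin x : iter (ones_bin x) drop_top x = 0.
Proof.
have := ones_bin_iter_drop_top (leqnn (ones_bin x)); rewrite subnn.
by case: (posnP (iter (ones_bin x) drop_top x)) => // /ones_bin_drop_top ->.
Qed.

Lemma iter_drop_top_le x i : iter i drop_top x <= x.
Proof. by elim: i => // i IH; rewrite iterS (leq_trans _ IH) ?leq_subr. Qed.

Lemma odd_div_compl m x i : x < 2 ^ m -> i < m ->
  odd ((2 ^ m - 1 - x) %/ 2 ^ i) = ~~ odd (x %/ 2 ^ i).
Proof.
move=> x_lt lt_im.
have pow_m : 2 ^ m = 2 ^ (m - i) * 2 ^ i by rewrite -expnD subnK // ltnW.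
have q_lt : x %/ 2 ^ i < 2 ^ (m - i) by rewrite ltn_divLR ?expn_gt0 // -pow_m.
have r_lt : x %% 2 ^ i < 2 ^ i by rewrite ltn_mod expn_gt0.
have -> : 2 ^ m - 1 - x = (2 ^ (m - i) - 1 - x %/ 2 ^ i) * 2 ^ i + (2 ^ i - 1 - x %% 2 ^ i).
  rewrite {1}(divn_eq x (2 ^ i)) pow_m.
  move: q_lt r_lt; move: (x %/ 2 ^ i) (x %% 2 ^ i) (2 ^ i) (2 ^ (m - i)) => q r B A.
  nia.
rewrite divnMDl ?expn_gt0 // (@divn_small (2 ^ i - 1 - _)); last first.
  by rewrite -subnDA ltn_subrL expn_gt0.
rewrite addn0 oddB; last by rewrite leq_subRL ?expn_gt0 // add1n.
by rewrite oddB ?expn_gt0 // oddX subn_eq0 leqNgt lt_im.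
Qed.

Lemma ones_bin_compl m x : x < 2 ^ m -> ones_bin x + ones_bin (2 ^ m - 1 - x) = m.
Proof.
move=> x_lt; rewrite !(ones_bin_below (m := m)) //; last by rewrite -subnDA ltn_subrL expn_gt0.
rewrite /ones_below [X in _ + X](@eq_in_count _ _ (predC (fun i => odd (x %/ 2 ^ i)))).
  by rewrite count_predC size_iota.
by move=> i; rewrite mem_iota => /andP [_ lt_im] /=; rewrite odd_div_compl.
Qed.

Lemma zeros_bin_add_ones x : zeros_bin x + ones_bin x = (trunc_log 2 x).+1.
Proof.
rewrite addnC -(size_iota 0 (trunc_log 2 x).+1) -(size_map (fun i => x %/ 2 ^ i %% 2)).
rewrite -(count_predC (pred1 1)); congr (_ + _).
apply: eq_in_count => _ /mapP [i _ ->] /=; rewrite modn2; by case: odd.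
Qed.

Lemma sum_exp2_iota b : \sum_(t <- iota 0 b) 2 ^ t < 2 ^ b.
Proof.
elim: b => [|b IH]; first by rewrite big_nil.
by rewrite -[in iota _ _]addn1 iotaD big_cat big_seq1 /= expnS mul2n -addnn ltn_add2r.
Qed.

Section DistinctExponents.
Variables (I : finType) (A : pred I) (h : I -> nat) (b : nat).
Hypotheses (h_inj : {in A &, injective h}) (h_lt : forall x, A x -> h x < b).

Let image_uniq : uniq [seq h x | x <- enum A].
Proof. by rewrite map_inj_in_uniq ?enum_uniq // => x y; rewrite !mem_enum; apply: h_inj. Qed.

Let image_sub : {subset [seq h x | x <- enum A] <= iota 0 b}.
Proof. by move=> t /mapP [x]; rewrite mem_enum => /h_lt lt_xb ->; rewrite mem_iota. Qed.

Lemma card_injective_bounded : #|A| <= b.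
Proof. by rewrite cardE -(size_map h) -(size_iota 0 b) uniq_leq_size. Qed.

Lemma sum_exp2_injective_bounded : \sum_(x | A x) 2 ^ h x < 2 ^ b.
Proof.
have -> : \sum_(x | A x) 2 ^ h x = \sum_(t <- [seq h x | x <- enum A]) 2 ^ t.
  by rewrite big_map big_enum.
apply: leq_ltn_trans (sum_exp2_iota b).
exact: (uniq_sub_le_big leqnn (fun x y => leq_addr y x) _ _ image_uniq (iota_uniq 0 b) image_sub).
Qed.
End DistinctExponents.

Lemma finite_recurrent (T : finType) (E : nat -> T) :
  exists x, forall N, exists i, N <= i /\ E i = x.
Proof.
apply: NNPP => no_recurrent.
have /fin_all_exists [N NP] : forall x, exists N, forall i, N <= i -> E i <> x.
  move=> x; apply: NNPP => recurrent; apply: no_recurrent; exists x => N0.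
  apply: NNPP => late; apply: recurrent; exists N0 => i le_i Ei.
  by apply: late; exists i.
exact: NP (E (\max_x N x)) _ (leq_bigmax _) erefl.
Qed.

Section Reachability.
Variables (P : protocol) (n : nat).
Implicit Types C D : config P n.

Lemma reachable_trans C1 C2 C3 : reachable C1 C2 -> reachable C2 C3 -> reachable C1 C3.
Proof. by elim=> // A B E AB _ IH /IH; apply: reach_step. Qed.

Lemma reachable_inv (I : config P n -> Prop) :
  (forall C D, I C -> transition C D -> I D) -> forall C D, reachable C D -> I C -> I D.
Proof. by move=> I_step C D; elim=> // A B E AB _ IH IA; apply: IH (I_step _ _ IA AB). Qed.

Lemma fair_eventually (E : nat -> config P n) (G : config P n -> Prop) :
  execution E -> fair E ->
  (forall C, reachable (init_config P n) C -> exists2 D, reachable C D & G D) ->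
  (forall C D, G C -> transition C D -> G D) ->
  exists i0, forall i, i0 <= i -> G (E i).
Proof.
move=> [E0 E_step] E_fair G_reach G_step.
have E_reach i : reachable (init_config P n) (E i).
  elim: i => [|i IH]; first by rewrite E0; apply: reach_refl.
  by apply: reachable_trans IH (reach_step (E_step i) (reach_refl _)).
have [C C_rec] := finite_recurrent E.
have [i0 [_ E_i0]] := C_rec 0.
have [D CD GD] := G_reach C (eq_ind _ _ (E_reach i0) _ E_i0).
have [i1 [_ E_i1]] := E_fair C D C_rec CD 0.
exists i1; elim=> [|i IH] le_i.
  by move: le_i; rewrite leqn0 => /eqP i1_0; rewrite -i1_0 E_i1.
case: (ltnP i1 i.+1) => [lt_i|ge_i]; first exact: G_step (IH lt_i) (E_step i).
have -> : i.+1 = i1 by apply/eqP; rewrite eqn_leq ge_i le_i.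
by rewrite E_i1.
Qed.

End Reachability.

Lemma set1_neq0 (T : finType) (x : T) : [set x] != set0.
Proof. by apply/set0Pn; exists x; rewrite in_set1. Qed.

Lemma sum_split_pair n (F : 'I_n -> nat) (i j : 'I_n) : i != j ->
  \sum_k F k = F i + F j + \sum_(k | (k != i) && (k != j)) F k.
Proof. by move=> ij; rewrite (bigD1 i) // (bigD1 j) 1?eq_sym //= addnA. Qed.

Lemma leq_sum_pair n (F : 'I_n -> nat) (i j : 'I_n) : i != j -> F i + F j <= \sum_k F k.
Proof. by move=> ij; rewrite (sum_split_pair F ij) leq_addr. Qed.

Lemma leq_sum_triple n (F : 'I_n -> nat) (i j k : 'I_n) : i != j -> k != i -> k != j ->
  F i + F j + F k <= \sum_l F l.
Proof.
by move=> ij ki kj; rewrite (sum_split_pair F ij) leq_add2l (bigD1 k) ?ki ?kj //= leq_addr.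
Qed.

Section DeterministicProtocol.
Variables (S : finType) (q0 top : S) (f : S -> S -> S * S).

Definition det_protocol : protocol :=
  @Protocol S (fun q => q == top) q0 (fun p q => [set f p q]) (fun p q => set1_neq0 (f p q)).

Lemma det_protocol_deterministic : deterministic det_protocol.
Proof. by move=> p q; rewrite cards1. Qed.

Hypotheses (f_top_l : forall q, f top q = (top, top)) (f_top_r : forall q, f q top = (top, top)).

Section Interaction.
Variable n : nat.
Implicit Types C D : config det_protocol n.

Definition interact C (i j : 'I_n) : config det_protocol n :=
  [ffun k => if k == i then (f (C i) (C j)).1 else if k == j then (f (C i) (C j)).2 else C k].

Lemma interact_fst C i j : interact C i j i = (f (C i) (C j)).1.
Proof. by rewrite ffunE eqxx. Qed.

Lemma interact_snd C i j : i != j -> interact C i j j = (f (C i) (C j)).2.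
Proof. by move=> ij; rewrite ffunE eq_sym (negbTE ij) eqxx. Qed.

Lemma interact_other C i j k : k != i -> k != j -> interact C i j k = C k.
Proof. by move=> ki kj; rewrite ffunE (negbTE ki) (negbTE kj). Qed.

Lemma interact_forall (Q : S -> Prop) C i j : Q (f (C i) (C j)).1 -> Q (f (C i) (C j)).2 ->
  (forall k, Q (C k)) -> forall k, Q (interact C i j k).
Proof. by move=> Q1 Q2 QC k; rewrite ffunE; do 2?case: ifP. Qed.

Lemma transitionP C D : transition C D <-> exists i j : 'I_n, i != j /\ D = interact C i j.
Proof.
split=> [[i [j [ij]]]|[i [j [ij ->]]]].
  rewrite in_set1 => /eqP Dij D_other; exists i, j; split=> //.
  apply/ffunP => k; rewrite ffunE; case: eqP => [->|/eqP ki]; first by rewrite -Dij.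
  by case: eqP => [->|/eqP kj]; [rewrite -Dij | apply: D_other].
exists i, j; split=> //; last exact: interact_other.
by rewrite interact_fst interact_snd // -surjective_pairing in_set1.
Qed.

Lemma reachable_interact C i j : i != j -> reachable C (interact C i j).
Proof. by move=> ij; apply: reach_step (reach_refl _); apply/transitionP; exists i, j. Qed.

Lemma sum_interact C (i j : 'I_n) (g : S -> nat) : i != j ->
  \sum_k g (interact C i j k) + g (C i) + g (C j) =
  \sum_k g (C k) + g (f (C i) (C j)).1 + g (f (C i) (C j)).2.
Proof.
move=> ij; have rest : \sum_(k | (k != i) && (k != j)) g (interact C i j k) =
                      \sum_(k | (k != i) && (k != j)) g (C k).
  by apply: eq_bigr => k /andP [ki kj]; rewrite interact_other.
rewrite !(sum_split_pair _ ij) rest interact_fst interact_snd //; lia.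
Qed.

Lemma interact_top C i j k : C k = top -> interact C i j k = top.
Proof.
move=> Ck; rewrite ffunE; case: ifP => [/eqP ki|_]; first by rewrite -ki Ck f_top_l.
by case: ifP => [/eqP kj|_] //; rewrite -kj Ck f_top_r.
Qed.

Lemma reachable_all_top C k : C k = top -> exists2 D, reachable C D & forall l, D l = top.
Proof.
pose non_top C := \sum_l (C l != top : nat).
have [m] := ubnP (non_top C); elim: m C k => // m IH C k /ltnSE le_m Ck.
have [l /= l_ntop|all_top] := pickP [pred l | C l != top]; last first.
  by exists C => [|l]; [apply: reach_refl | apply/eqP/negbFE/all_top].
have kl : k != l by apply: contraNneq l_ntop => <-; rewrite Ck.
have [|D CD allD] := IH (interact C k l) k _ (interact_top _ _ Ck).
  have := sum_interact C (fun q => q != top : nat) kl.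
  by rewrite -/(non_top _) -/(non_top C) Ck f_top_l l_ntop /= eqxx; lia.
by exists D => //; apply: reachable_trans (reachable_interact _ kl) CD.
Qed.

End Interaction.

Theorem det_protocol_computes (R : nat -> bool) :
  (forall n, 0 < n -> ~~ R n ->
     forall C, reachable (init_config det_protocol n) C -> forall k, C k != top) ->
  (forall n, 0 < n -> R n ->
     forall C, reachable (init_config det_protocol n) C ->
     exists2 D, reachable C D & exists k, D k = top) ->
  computes_1aware det_protocol R.
Proof.
move=> never_top top_reachable n n_gt0; split=> [/negbT notRn C reach k | Rn E exE fairE].
  exact/negbTE/(never_top n n_gt0 notRn C reach).
have [i0 all_top] : exists i0, forall i, i0 <= i -> forall k, E i k = top.
  apply: (fair_eventually (G := fun C : config det_protocol n => forall k, C k = top) exE fairE).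
    move=> C reach.
    have [D CD [k Dk]] := top_reachable n n_gt0 Rn C reach.
    have [D' DD' allD'] := reachable_all_top Dk.
    by exists D' => //; apply: reachable_trans CD DD'.
  by move=> C D allC /transitionP [i [j [_ ->]]] k; apply: interact_top.
by exists i0 => i le_i k; apply/eqP; apply: all_top.
Qed.

End DeterministicProtocol.

Section ThresholdProtocol.
Variables (absorb : bool) (m P d : nat).
Local Notation K := m.+1.
Local Notation r := (ones_bin P).
Hypothesis P_lt : P < 2 ^ K.
Hypothesis d_def : if absorb then d = 2 ^ K + P else d + P = 2 ^ K.+1.

Lemma d_eq : d = if absorb then 2 ^ K + P else 2 * 2 ^ K - P.
Proof. by move: d_def; rewrite [2 ^ K.+1]expnS; case: absorb; lia. Qed.

(* A leader at stage [i] has processed the [i] leading 1-bits of [P], leaving [rest i], and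
   holds [2^K] plus (absorbing) or minus (emitting) the processed part. *)
Local Notation rest i := (iter i drop_top P).
Local Notation top_bit i := (trunc_log 2 (rest i)).

Definition lead_val i := if absorb then d - rest i else 2 ^ K + rest i - P.

Lemma top_bit_bounds i : 0 < rest i -> 2 ^ top_bit i <= rest i < 2 ^ (top_bit i).+1.
Proof. by move=> rest_gt0; rewrite trunc_logP ?trunc_log_ltn. Qed.

Lemma top_bit_lt i : 0 < rest i -> top_bit i < K.
Proof.
move=> /top_bit_bounds /andP [le_i _]; rewrite -(ltn_exp2l _ _ (isT : 1 < 2)).
by apply: leq_ltn_trans (leq_trans le_i (iter_drop_top_le P i)) P_lt.
Qed.

Lemma lead_val0 : lead_val 0 = 2 ^ K.
Proof. by rewrite /lead_val d_eq /=; case: absorb; lia. Qed.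

Lemma lead_val_absorb i : absorb -> i < r -> lead_val i.+1 = lead_val i + 2 ^ top_bit i.
Proof.
move=> abs /iter_drop_top_gt0 /drop_top_add rest_i; rewrite /lead_val d_eq abs iterS.
by have := iter_drop_top_le P i; lia.
Qed.

Lemma lead_val_emit i : ~~ absorb -> i < r -> lead_val i.+1 + 2 ^ top_bit i = lead_val i.
Proof.
move=> /negbTE emit /iter_drop_top_gt0 /drop_top_add rest_i; rewrite /lead_val emit iterS.
by have := iter_drop_top_le P i; lia.
Qed.

Lemma P_le_d : P <= d.
Proof. by rewrite d_eq; case: absorb; lia. Qed.

Lemma exp2K_le_d : 2 ^ K <= d.
Proof. by rewrite d_eq; case: absorb; lia. Qed.

Lemma d_le_lead_val_add i : d <= lead_val i + 2 ^ K.
Proof. by rewrite /lead_val d_eq; case: absorb; have := iter_drop_top_le P i; lia. Qed.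

Definition state : finType := ('I_K + 'I_r.+1 + bool)%type.
Local Notation Tok j := (inl (inl j)).
Local Notation Lead i := (inl (inr i)).
Local Notation Zero := (inr false).
Local Notation Done := (inr true).

Definition leader_token (i : 'I_r.+1) (j : 'I_K) : state * state :=
  if d <= lead_val i + 2 ^ j then (Done, Done)
  else if absorb && (j == top_bit i :> nat) && (i < r) then (Lead (inord i.+1), Zero)
  else (Lead i, Tok j).

Definition leader_zero (i : 'I_r.+1) : state * state :=
  if d <= lead_val i then (Done, Done)
  else if ~~ absorb && (i < r) then (Lead (inord i.+1), Tok (inord (top_bit i)))
  else (Lead i, Zero).

Definition rule (p q : state) : state * state :=
  match p, q with
  | Done, _ | _, Done | Lead _, Lead _ => (Done, Done)
  | Tok j, Tok j' =>
      if j != j' then (p, q)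
      else if j < m then (Tok (inord j.+1), Zero) else (Lead ord0, Zero)
  | Lead i, Tok j => leader_token i j
  | Tok j, Lead i => swap_pair (leader_token i j)
  | Lead i, Zero => leader_zero i
  | Zero, Lead i => swap_pair (leader_zero i)
  | _, _ => (p, q)
  end.

Local Notation tp := (@det_protocol state (Tok ord0) Done rule).

Lemma rule_done_l q : rule Done q = (Done, Done).
Proof. by []. Qed.

Lemma rule_done_r p : rule p Done = (Done, Done).
Proof. by case: p => [[]|[]]. Qed.

Definition weight (q : state) : nat :=
  match q with Tok j => 2 ^ j | Lead i => lead_val i | _ => 0 end.
Definition is_tok (q : state) : bool := if q is Tok _ then true else false.
Definition is_lead (q : state) : bool := if q is Lead _ then true else false.
Definition tok_index (q : state) : nat := if q is Tok j then j else 0.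
Definition stage (q : state) : nat := if q is Lead i then i.+1 else 0.

Lemma leader_token_weight i j : leader_token i j = (Done, Done) \/
  weight (leader_token i j).1 + weight (leader_token i j).2 = lead_val i + 2 ^ j.
Proof.
rewrite /leader_token; case: ifP => _; [by left | right].
case: ifP => [/andP [/andP [abs /eqP ->] lt_ir]|_] //=.
by rewrite addn0 inordK ?lead_val_absorb.
Qed.

Lemma leader_zero_weight i : leader_zero i = (Done, Done) \/
  weight (leader_zero i).1 + weight (leader_zero i).2 = lead_val i.
Proof.
rewrite /leader_zero; case: ifP => _; [by left | right].
case: ifP => [/andP [emit lt_ir]|_] /=; last by rewrite addn0.
by rewrite !inordK ?lead_val_emit ?top_bit_lt ?iter_drop_top_gt0.
Qed.

Lemma rule_weight p q :
  rule p q = (Done, Done) \/ weight (rule p q).1 + weight (rule p q).2 = weight p + weight q.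
Proof.
have swapE (pr : state * state) c : pr = (Done, Done) \/ weight pr.1 + weight pr.2 = c ->
    swap_pair pr = (Done, Done) \/ weight pr.2 + weight pr.1 = c.
  by case=> [->|<-]; [left | right; rewrite addnC].
case: p => [[j|i]|[]]; case: q => [[j'|i']|[]] /=; try by [left | right].
- case: eqP => [<-|_] /=; last by right.
  case: ifP => lt_jm /=; right; first by rewrite inordK // expnS mul2n addn0 addnn.
  have -> : nat_of_ord j = m by have := ltn_ord j; lia.
  by rewrite [lead_val _]lead_val0 addn0 expnS mul2n addnn.
- by rewrite [2 ^ j + _]addnC; apply: swapE; apply: leader_token_weight.
- exact: leader_token_weight.
- by rewrite addn0; apply: leader_zero_weight.
- by rewrite add0n; apply: swapE; apply: leader_zero_weight.
Qed.

Lemma rule_safe p q : p != Done -> q != Done -> ~~ (is_lead p && is_lead q) ->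
  weight p + weight q < d -> (rule p q).1 != Done /\ (rule p q).2 != Done.
Proof.
case: p => [[j|i]|[]]; case: q => [[j'|i']|[]] //= _ _ not_two lt_d;
  rewrite /leader_token /leader_zero; repeat case: ifP => //= ?; lia.
Qed.

Lemma rule_leaders p q : (p, q) != (Tok ord_max, Tok ord_max) ->
  is_lead (rule p q).1 + is_lead (rule p q).2 <= is_lead p + is_lead q.
Proof.
case: p => [[j|i]|[]]; case: q => [[j'|i']|[]] //= not_max.
- case: (j =P j') not_max => [<-|//] /=; case: ifP => // /negbT; rewrite -leqNgt => le_mj.
  have -> : j = ord_max by apply/val_inj => /=; have := ltn_ord j; lia.
  by rewrite eqxx.
all: by rewrite /leader_token /leader_zero; repeat case: ifP.
Qed.

Section Configurations.
Variable n : nat.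
Implicit Types C D : config tp n.

Definition value C := \sum_k weight (C k).
Definition leaders C := \sum_k (is_lead (C k) : nat).
Definition tokens C := \sum_k (is_tok (C k) : nat).
Definition stages C := \sum_k stage (C k).
Definition has_done C := exists k, C k = Done.

Definition safe_config C := [/\ forall k, C k != Done, leaders C <= 1 & value C = n].

Lemma safe_init : safe_config (init_config tp n).
Proof.
split=> [k||]; first by rewrite ffunE.
  by rewrite /leaders big1 // => k _; rewrite ffunE.
by rewrite /value (eq_bigr (fun _ => 1)) => [|k _]; rewrite ?ffunE // sum1_card card_ord.
Qed.

Lemma no_leader_beside_top_pair C i j k : value C < d -> C i = Tok ord_max -> C j = Tok ord_max ->
  i != j -> k != i -> k != j -> ~~ is_lead (C k).
Proof.
move=> lt_d Ci Cj ij ki kj; apply/negP => lead_k.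
have := leq_sum_triple (fun l => weight (C l)) ij ki kj; rewrite -/(value C) Ci Cj /=.
case: (C k) lead_k => [[//|i0]|//] _ /=.
by have := d_le_lead_val_add i0; rewrite expnS mul2n -addnn; lia.
Qed.

Lemma safe_step C D : n < d -> safe_config C -> transition C D -> safe_config D.
Proof.
move=> lt_nd [no_done le_lead valC] /transitionP [i [j [ij ->]]].
have not_two : ~~ (is_lead (C i) && is_lead (C j)).
  apply/negP => /andP [li lj].
  by have := leq_sum_pair (fun k => is_lead (C k) : nat) ij; rewrite li lj -/(leaders C); lia.
have val_lt : weight (C i) + weight (C j) < d.
  by have := leq_sum_pair (fun k => weight (C k)) ij; rewrite -/(value C); lia.
have [out1 out2] := rule_safe (no_done i) (no_done j) not_two val_lt.
split.
- exact: (interact_forall (Q := fun q : state => q != Done)).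
- have := sum_interact C (fun q => is_lead q : nat) ij; rewrite -/(leaders C) -/(leaders _).
  case: (eqVneq (C i, C j) (Tok ord_max, Tok ord_max)) => [[Ci Cj]|/rule_leaders]; last by lia.
  have -> : leaders C = 0.
    apply/eqP; rewrite sum_nat_eq0; apply/forallP => k.
    case: (eqVneq k i) => [->|ki]; first by rewrite Ci.
    case: (eqVneq k j) => [->|kj]; first by rewrite Cj.
    by rewrite eqb0 (no_leader_beside_top_pair _ Ci Cj) // valC.
  by rewrite Ci Cj /= eqxx ltnn /=; lia.
- have := sum_interact C weight ij; rewrite -/(value C) -/(value _).
  case: (rule_weight (C i) (C j)) => [done|]; last by lia.
  by move: out1; rewrite done.
Qed.

Definition token_value C := \sum_(k | is_tok (C k)) 2 ^ tok_index (C k).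

Lemma value_split C : value C = \sum_(k | is_lead (C k)) weight (C k) + token_value C.
Proof.
rewrite /value (bigID (fun k => is_lead (C k))) /=; congr (_ + _).
rewrite /token_value big_mkcond [RHS]big_mkcond /=.
by apply: eq_bigr => k _; case: (C k) => [[]|[]].
Qed.

Lemma tokensE C : tokens C = #|[pred k | is_tok (C k)]|.
Proof.
by rewrite /tokens -sum1_card [RHS]big_mkcond; apply: eq_bigr => k _; rewrite inE; case: is_tok.
Qed.

Lemma tokens_le C : tokens C <= n.
Proof. by rewrite -[n]card_ord -sum1_card; apply: leq_sum => k _; apply: leq_b1. Qed.

Section Liveness.
Hypothesis d_le_n : d <= n.

(* Lexicographic in (stage, number of tokens), since there are at most [n] tokens. *)
Definition potential C := tokens C + n.+1 * (r.+1 - stages C).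
Definition done_reachable C := exists2 D, reachable C D & has_done D.
Definition advances C := done_reachable C \/ exists2 D, reachable C D & potential D < potential C.

Lemma done_reachable_rule C i j : i != j -> rule (C i) (C j) = (Done, Done) -> done_reachable C.
Proof.
move=> ij done; exists (interact C i j); first exact: reachable_interact.
by exists i; rewrite interact_fst done.
Qed.

Lemma done_reachable_two_leaders C i j :
  i != j -> is_lead (C i) -> is_lead (C j) -> done_reachable C.
Proof.
move=> ij lead_i lead_j; apply: (done_reachable_rule ij).
by case: (C i) lead_i => [[]|[]] //; case: (C j) lead_j => [[]|[]].
Qed.

Lemma advances_by_tokens C i j : i != j ->
  stage (rule (C i) (C j)).1 + stage (rule (C i) (C j)).2 = stage (C i) + stage (C j) ->
  is_tok (rule (C i) (C j)).1 + is_tok (rule (C i) (C j)).2 < is_tok (C i) + is_tok (C j) ->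
  advances C.
Proof.
move=> ij same_stage fewer; right; exists (interact C i j); first exact: reachable_interact.
have := sum_interact C stage ij; have := sum_interact C (fun q => is_tok q : nat) ij.
rewrite /potential -/(stages C) -/(stages _) -/(tokens C) -/(tokens _); lia.
Qed.

Lemma advances_by_stage C i j : i != j -> stages C <= r ->
  stage (rule (C i) (C j)).1 + stage (rule (C i) (C j)).2 = (stage (C i) + stage (C j)).+1 ->
  advances C.
Proof.
move=> ij le_r next_stage; right; exists (interact C i j); first exact: reachable_interact.
have := sum_interact C stage ij; rewrite -/(stages C) -/(stages _) => stagesE.
rewrite /potential; have -> : r.+1 - stages C = (r.+1 - stages (interact C i j)).+1 by lia.
by have := tokens_le (interact C i j); rewrite mulnS; lia.
Qed.

Lemma advances_twin_tokens C i j (t : 'I_K) : i != j -> C i = Tok t -> C j = Tok t -> advances C.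
Proof.
move=> ij Ci Cj.
have stepE : rule (C i) (C j) = if t < m then (Tok (inord t.+1), Zero) else (Lead ord0, Zero).
  by rewrite Ci Cj /= eqxx.
case: ifP stepE => [lt_tm|_] stepE; first by apply: (advances_by_tokens ij); rewrite stepE Ci Cj.
have [k /= lead_k|no_lead] := pickP [pred k | is_lead (C k)].
  have ki : k != i by apply: contraTneq lead_k => ->; rewrite Ci.
  have kj : k != j by apply: contraTneq lead_k => ->; rewrite Cj.
  have [|||D reach_D done_D] := @done_reachable_two_leaders (interact C i j) i k.
  - by rewrite eq_sym.
  - by rewrite interact_fst stepE.
  - by rewrite interact_other.
  by left; exists D => //; apply: reachable_trans (reachable_interact _ ij) reach_D.
apply: (advances_by_stage ij); last by rewrite stepE Ci Cj.
by rewrite /stages big1 // => k _; move: (no_lead k) => /=; case: (C k) => [[]|[]].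
Qed.

Lemma tok_index_lt q : is_tok q -> tok_index q < K.
Proof. by case: q => [[j _|]|]; first exact: ltn_ord. Qed.

Section SingleLeader.
Variables (C : config tp n) (l : 'I_n) (i : 'I_r.+1).
Hypotheses (no_done : forall k, C k != Done) (valC : value C = n) (Cl : C l = Lead i).
Hypothesis one_leader : forall k, k != l -> ~~ is_lead (C k).
Hypothesis distinct_tokens : {in [pred k | is_tok (C k)] &, injective (fun k => tok_index (C k))}.

Lemma single_leader_value : lead_val i + token_value C = n.
Proof.
rewrite -valC value_split (big_pred1 l) ?Cl // => k /=.
by case: (eqVneq k l) => [->|kl]; [rewrite Cl | apply/negbTE/one_leader].
Qed.

Lemma single_leader_stages : stages C = i.+1.
Proof.
rewrite /stages (bigD1 l) //= Cl big1 ?addn0 // => k kl.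
by case: (C k) (one_leader kl) => [[]|[]].
Qed.

Lemma token_value_lt b : (forall k, is_tok (C k) -> tok_index (C k) < b) -> token_value C < 2 ^ b.
Proof. exact: sum_exp2_injective_bounded. Qed.

Lemma exists_other_agent : exists2 k, k != l & ~~ is_lead (C k).
Proof.
have /card_gt0P [k kl] : 0 < #|predC1 l|.
  by rewrite cardC1 card_ord; have := exp2K_le_d; rewrite expnS; have := expn_gt0 2 m; lia.
by exists k => //; apply: one_leader.
Qed.

Lemma advances_trigger : d <= lead_val i -> advances C.
Proof.
move=> trig; left; have [k kl not_lead] := exists_other_agent.
apply: (@done_reachable_rule _ l k); first by rewrite eq_sym.
rewrite Cl; case: (C k) (no_done k) not_lead => [[j|//]|[]] //= _ _.
  by rewrite /leader_token ifT // (leq_trans trig) ?leq_addr.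
by rewrite /leader_zero trig.
Qed.

Lemma advances_absorb : absorb -> advances C.
Proof.
move=> abs; case: (leqP d (lead_val i)) => [/advances_trigger //|lt_d].
have rest_pos : 0 < rest i by move: lt_d; rewrite /lead_val abs; lia.
have lt_ir : i < r.
  rewrite ltn_neqAle -ltnS ltn_ord andbT; apply: contraTneq rest_pos => ->.
  by rewrite iter_drop_top_ones_bin.
have [bit_lo bit_hi] := andP (top_bit_bounds rest_pos).
have [k /andP [tok_k le_bit]|small] :=
  pickP [pred k | is_tok (C k) && (top_bit i <= tok_index (C k))]; last first.
  have := single_leader_value; have : token_value C < 2 ^ top_bit i.
    by apply: token_value_lt => k tok_k; move: (small k); rewrite /= tok_k ltnNge /= => ->.
  by rewrite /lead_val abs; have := iter_drop_top_le P i; have := P_le_d; lia.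
case Ck: (C k) tok_k le_bit => [[j|//]|//] _ /= le_bit.
have kl : k != l by apply/eqP => kl; move: Ck; rewrite kl Cl.
case: (leqP d (lead_val i + 2 ^ j)) => [trig|no_trig].
  by left; apply: (@done_reachable_rule _ l k); rewrite 1?eq_sym // Cl Ck /= /leader_token trig.
have j_bit : nat_of_ord j = top_bit i.
  apply/eqP; rewrite eqn_leq le_bit andbT; apply: contraTT no_trig.
  rewrite -leqNgt -ltnNge => lt_bit.
  have : 2 ^ (top_bit i).+1 <= 2 ^ j by rewrite leq_exp2l.
  by rewrite /lead_val abs; lia.
apply: (@advances_by_stage _ l k); rewrite 1?eq_sym ?single_leader_stages // Cl Ck /=.
by rewrite /leader_token leqNgt no_trig abs j_bit eqxx lt_ir /= inordK.
Qed.

Lemma advances_emit : ~~ absorb -> advances C.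
Proof.
move=> emit; case: (leqP d (lead_val i)) => [/advances_trigger //|lt_d].
have tokens_lt : token_value C < 2 ^ K by apply: token_value_lt => k /tok_index_lt.
have lt_ir : i < r.
  rewrite ltn_neqAle -ltnS ltn_ord andbT; apply/eqP => ir; move: tokens_lt.
  have := single_leader_value; rewrite /lead_val (negbTE emit) ir iter_drop_top_ones_bin.
  by have := d_eq; rewrite (negbTE emit); lia.
have [k /eqP Ck|no_zero] := pickP [pred k | C k == Zero]; last first.
  exfalso.
  have : \sum_(k < n) 1 <= \sum_k ((is_tok (C k) : nat) + (k == l)).
    apply: leq_sum => k _; case: (eqVneq k l) => [_|kl]; first by rewrite addn1.
    rewrite addn0.
    by move: (no_zero k) (no_done k) (one_leader kl) => /=; case: (C k) => [[]|[]].
  rewrite big_split /= sum1_card card_ord -/(tokens C) [X in _ + X](bigD1 l) //= eqxx.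
  rewrite big1 => [|k /negbTE -> //].
  have : tokens C <= K.
    by rewrite tokensE; apply: card_injective_bounded distinct_tokens _ => k /tok_index_lt.
  by have := ltn_expl K (isT : 1 < 2); have := d_eq; rewrite (negbTE emit) /=; lia.
have kl : k != l by apply/eqP => kl; move: Ck; rewrite kl Cl.
apply: (@advances_by_stage _ l k); rewrite 1?eq_sym ?single_leader_stages // Cl Ck /=.
by rewrite /leader_zero leqNgt lt_d emit lt_ir /= inordK.
Qed.

Lemma advances_single_leader : advances C.
Proof. by case abs: absorb; [apply: advances_absorb | apply: advances_emit]; rewrite abs. Qed.

End SingleLeader.

Lemma advances_not_done C : (forall k, C k != Done) -> value C = n -> advances C.
Proof.
move=> no_done valC.
have [[i j] /andP [/andP [ij lead_i] lead_j]|no_two] :=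
  pickP [pred ij : 'I_n * 'I_n | (ij.1 != ij.2) && is_lead (C ij.1) && is_lead (C ij.2)].
  by left; apply: done_reachable_two_leaders ij lead_i lead_j.
have [[i j] /andP [/andP [ij tok_i] /eqP Cij]|no_twin] :=
  pickP [pred ij : 'I_n * 'I_n | (ij.1 != ij.2) && is_tok (C ij.1) && (C ij.1 == C ij.2)].
  by case Ci: (C i) tok_i => [[t|]|] // _; apply: (advances_twin_tokens ij Ci); rewrite -Cij.
have distinct : {in [pred k | is_tok (C k)] &, injective (fun k => tok_index (C k))}.
  move=> k k'; rewrite !inE => tok_k tok_k' same; apply/eqP.
  apply: contraFT (no_twin (k, k')) => kk' /=.
  rewrite kk' tok_k /=; case: (C k) tok_k same => [[t|]|] //; case: (C k') tok_k' => [[t'|]|] //.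
  by move=> _ _ /val_inj ->.
have [l /= lead_l|no_lead] := pickP [pred k | is_lead (C k)].
  case Cl: (C l) lead_l => [[|i]|] // _; apply: (advances_single_leader no_done valC Cl _ distinct).
  by move=> k kl; apply: contraFN (no_two (k, l)) => /= lead_k; rewrite kl lead_k Cl.
exfalso; have := value_split C; rewrite big_pred0 // valC add0n => nE.
have : token_value C < 2 ^ K by apply: sum_exp2_injective_bounded distinct _ => k /tok_index_lt.
by have := exp2K_le_d; lia.
Qed.

Lemma value_conserved C : reachable (init_config tp n) C -> has_done C \/ value C = n.
Proof.
move=> reach; apply: (reachable_inv (I := fun C => has_done C \/ value C = n) _ reach).
  move=> C1 C2 [[k C1k]|valC1] /transitionP [i [j [ij ->]]].
    by left; exists k; apply: interact_top C1k; [apply: rule_done_l | apply: rule_done_r].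
  case: (rule_weight (C1 i) (C1 j)) => [done|conserved].
    by left; exists i; rewrite interact_fst done.
  by right; have := sum_interact C1 weight ij; rewrite -/(value C1) -/(value _); lia.
by right; case: (safe_init).
Qed.

Lemma done_reachable_from_init C : reachable (init_config tp n) C -> done_reachable C.
Proof.
have [k] := ubnP (potential C); elim: k C => // k IH C /ltnSE le_mu reach.
case: (value_conserved reach) => [doneC|valC]; first by exists C => //; apply: reach_refl.
have [l /eqP Cl|no_done] := pickP [pred l | C l == Done].
  by exists C; [apply: reach_refl | exists l].
have [//|[D CD lt_mu]] := advances_not_done (fun l => negbT (no_done l)) valC.
have [|E DE doneE] := IH D _ (reachable_trans reach CD); first exact: leq_trans lt_mu le_mu.
by exists E => //; apply: reachable_trans CD DE.
Qed.

End Liveness.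

End Configurations.

Definition threshold_protocol : protocol := tp.

Lemma threshold_protocol_deterministic : deterministic threshold_protocol.
Proof. exact: det_protocol_deterministic. Qed.

Lemma threshold_protocol_computes : computes_1aware threshold_protocol (threshold d).
Proof.
apply: (det_protocol_computes rule_done_l rule_done_r) => n _.
  rewrite /threshold -ltnNge => lt_nd C reach.
  have inv_step C1 C2 := @safe_step n C1 C2 lt_nd.
  by case: (reachable_inv inv_step reach (safe_init n)).
by move=> le_dn C /(done_reachable_from_init le_dn).
Qed.

Lemma card_threshold_protocol : #|st threshold_protocol| = K + r.+1 + 2.
Proof. by rewrite /= !card_sum !card_ord card_bool. Qed.

End ThresholdProtocol.

Definition threshold_in_states (d N : nat) : Prop :=
  exists P : protocol, [/\ deterministic P, computes_1aware P (threshold d) & #|st P| <= N].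

Lemma threshold_in_states_le d N N' :
  N <= N' -> threshold_in_states d N -> threshold_in_states d N'.
Proof. by move=> le_N [P [det comp card]]; exists P; split=> //; apply: leq_trans le_N. Qed.

Lemma threshold_in_states_one : threshold_in_states 1 1.
Proof.
pose f (p q : unit) := (tt, tt).
exists (det_protocol tt tt f); split; first exact: det_protocol_deterministic.
  apply: (det_protocol_computes (f := f) (fun _ => erefl) (fun _ => erefl)) => n n_gt0.
    by rewrite /threshold n_gt0.
  by move=> _ C _; exists C; [apply: reach_refl | exists (Ordinal n_gt0); case: (C _)].
by rewrite /= card_unit.
Qed.

Lemma threshold_in_states_absorb d :
  1 < d -> threshold_in_states d (trunc_log 2 d + ones_bin d + 2).
Proof.
move=> d_gt1; set K := trunc_log 2 d.
have K_gt0 : 0 < K by rewrite trunc_log_gt0.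
have le_Kd : 2 ^ K <= d := @trunc_logP 2 d isT (ltnW d_gt1).
have lt_dK : d < 2 ^ K.+1 := @trunc_log_ltn 2 d isT.
have P_lt : d - 2 ^ K < 2 ^ K.-1.+1 by rewrite prednK //; rewrite expnS in lt_dK; lia.
have d_def : d = 2 ^ K.-1.+1 + (d - 2 ^ K) by rewrite prednK // subnKC.
exists (threshold_protocol true K.-1 (d - 2 ^ K) d); split.
- exact: threshold_protocol_deterministic.
- exact: (@threshold_protocol_computes true _ _ _ P_lt d_def).
- by rewrite card_threshold_protocol prednK // (@ones_bin_drop_top d) //; lia.
Qed.

Lemma threshold_in_states_emit d :
  2 < d -> threshold_in_states d (trunc_log 2 d.-1 + zeros_bin d.-1 + 3).
Proof.
move=> d_gt2; set K := trunc_log 2 d.-1.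
have K_gt0 : 0 < K by rewrite trunc_log_gt0; lia.
have le_Kd : 2 ^ K <= d.-1 by apply: (@trunc_logP 2 d.-1); lia.
have lt_dK : d.-1 < 2 ^ K.+1 := @trunc_log_ltn 2 d.-1 isT.
have P_lt : 2 ^ K.+1 - d < 2 ^ K.-1.+1 by rewrite prednK //; rewrite expnS in lt_dK *; lia.
have d_def : d + (2 ^ K.+1 - d) = 2 ^ K.-1.+2 by rewrite prednK //; lia.
have ones_P : ones_bin (2 ^ K.+1 - d) = zeros_bin d.-1.
  have := ones_bin_compl lt_dK; have := zeros_bin_add_ones d.-1; rewrite -/K.
  have -> : 2 ^ K.+1 - 1 - d.-1 = 2 ^ K.+1 - d by lia.
  lia.
exists (threshold_protocol false K.-1 (2 ^ K.+1 - d) d); split.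
- exact: threshold_protocol_deterministic.
- exact: (@threshold_protocol_computes false _ _ _ P_lt d_def).
- by rewrite card_threshold_protocol prednK // ones_P; lia.
Qed.

Lemma threshold_in_states_log d : 0 < d ->
  exists2 K, 2 ^ K <= d & threshold_in_states d (K + minn (ones_bin d) (zeros_bin d.-1) + 3).
Proof.
move=> d_gt0; case: (ltngtP d 1) => [|d_gt1|->]; first lia; last first.
  by exists 0 => //; apply: threshold_in_states_le threshold_in_states_one; lia.
(* Absorbing uses [ones_bin d] leader states, emitting [(zeros_bin d.-1).+1]. *)
case: (leqP (ones_bin d) (zeros_bin d.-1).+1) => [few_ones|many_ones].
  exists (trunc_log 2 d); first by apply: (@trunc_logP 2 d); lia.
  by apply: threshold_in_states_le (threshold_in_states_absorb d_gt1); lia.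
have d_gt2 : 2 < d by rewrite ltn_neqAle d_gt1 andbT; apply: contraTneq many_ones => <-.
exists (trunc_log 2 d.-1); first by apply: leq_trans (leq_pred d); apply: (@trunc_logP 2 d.-1); lia.
by apply: threshold_in_states_le (threshold_in_states_emit d_gt2); lia.
Qed.

(* Imported only now: [Reals] rebinds [^] on [nat] to [Nat.pow]. *)
From Stdlib Require Import Reals Lra.

Lemma INR_expn2 K : INR (expn 2 K) = (2 ^ K)%R.
Proof. by elim: K => // K IH; rewrite expnS mult_INR IH /=; lra. Qed.

Lemma log2_ge K d : expn 2 K <= d -> (INR K <= ln (INR d) / ln 2)%R.
Proof.
move=> /leP /le_INR; rewrite INR_expn2 => le_d.
have ln2_pos : (0 < ln 2)%R by rewrite -ln_1; apply: ln_increasing; lra.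
have pow_pos : (0 < 2 ^ K)%R by apply: pow_lt; lra.
have : (ln (2 ^ K) <= ln (INR d))%R.
  by case: (Rle_lt_or_eq_dec _ _ le_d) => [/(ln_increasing _ _ pow_pos)|<-]; lra.
rewrite ln_pow; last lra.
by move=> le_ln; apply: (Rmult_le_reg_r (ln 2)) => //; rewrite /Rdiv Rmult_assoc Rinv_l; lra.
Qed.

Theorem theorem1 :
  exists c : R, forall d : nat, 0 < d ->
    exists P : protocol,
      deterministic P /\ computes_1aware P (threshold d) /\
      (INR #|st P| <= ln (INR d) / ln 2 + INR (minn (ones_bin d) (zeros_bin d.-1)) + c)%R.
Proof.
exists 3%R => d d_gt0.
have [K /log2_ge le_log [P [det comp card]]] := threshold_in_states_log d_gt0.
exists P; split=> //; split=> //.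
move/leP/le_INR: card; rewrite !plus_INR (_ : INR 3 = 3%R) /=; lra.
Qed.
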